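(* Let $M,N$ be positive integers and $C_0,\dots,C_{N-1}\in\{0,1,\dots,M-1\}$. For $p\in\{0,\dots,M-1\}$, $q\in\{0,\dots,N-1\}$ let $\bm\psi_{p,q}\in\mathbb{C}^N$ have entries $[\bm\psi_{p,q}]_n=\frac{1}{\sqrt N}e^{j\frac{2\pi p}{M}C_n+j\frac{2\pi q}{N}n}$, let $\bm\Psi_q=[\bm\psi_{0,q},\dots,\bm\psi_{M-1,q}]\in\mathbb{C}^{N\times M}$ and $\bm\Psi=[\bm\Psi_0,\dots,\bm\Psi_{N-1}]\in\mathbb{C}^{N\times MN}$. Then $\bm X:=\bm\Psi^H\bm\Psi\in\mathbb{C}^{MN\times MN}$, viewed as an $N\times N$ array of $M\times M$ blocks $\bm X_{q_1,q_2}=\bm\Psi_{q_1}^H\bm\Psi_{q_2}$, is a block circulant matrix with circulant blocks; that is, each block $\bm X_{q_1,q_2}$ is circulant, and $\bm X_{q_1,q_2}=\bm X_{0,(q_2-q_1)\bmod N}$ for all $q_1,q_2\in\{0,\dots,N-1\}$.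
   Context: $j$ denotes the imaginary unit and $(\cdot)^H$ the conjugate transpose. An $M\times M$ matrix $\bm A$ is circulant if $[\bm A]_{p_1,p_2}=[\bm A]_{0,(p_2-p_1)\bmod M}$. *)

From HB Require Import structures.
From mathcomp Require Import all_boot all_order all_algebra.
From mathcomp Require Import reals trigo.
From mathcomp.real_closed Require Import complex.
Set Implicit Arguments. Unset Strict Implicit. Unset Printing Implicit Defensive.
Import Order.TTheory GRing.Theory Num.Theory.
Local Open Scope ring_scope.
Local Open Scope complex_scope.

Definition expj (R : realType) (theta : R) : R[i] := Complex (cos theta) (sin theta).

Definition ctrmx (R : realType) m n (A : 'M[R[i]]_(m, n)) : 'M[R[i]]_(n, m) :=
  \matrix_(i, j) (A j i)^*.

Definition psi_entry (R : realType) (M N : nat) (Cseq : 'I_N -> 'I_M)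
    (p q : nat) (n : 'I_N) : R[i] :=
  ((Num.sqrt (N%:R : R))^-1)%:C *
  expj (2 * pi * p%:R / M%:R * (Cseq n)%:R + 2 * pi * q%:R / N%:R * n%:R).

(* Psi = [Psi_0, ..., Psi_{N-1}], Psi_q = [psi_{0,q},...,psi_{M-1,q}]:
   column index k = q * M + p. *)
Definition Psi (R : realType) (M N : nat) (Cseq : 'I_N -> 'I_M)
    : 'M[R[i]]_(N, N * M) :=
  \matrix_(n < N, k < N * M) psi_entry R Cseq (k %% M) (k %/ M) n.

Definition Xmat (R : realType) (M N : nat) (Cseq : 'I_N -> 'I_M)
    : 'M[R[i]]_(N * M) := ctrmx (Psi R Cseq) *m Psi R Cseq.

(* block (q1,q2) of an (N*M)x(N*M) matrix, entry (p1,p2) at (q1*M+p1, q2*M+p2) *)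
Definition mxblk (T : Type) (M N : nat) (X : 'M[T]_(N * M)) (q1 q2 : 'I_N)
    : 'M[T]_M :=
  \matrix_(p1, p2) X (mxvec_index q1 p1) (mxvec_index q2 p2).

Definition circulant (T : Type) (M : nat) (A : 'M[T]_M) : Prop :=
  forall p1 p2 p0 j : 'I_M, val p0 = 0%N -> val j = ((p2 + M - p1) %% M)%N ->
    A p1 p2 = A p0 j.

From HB Require Import structures.
From mathcomp Require Import all_boot all_order all_algebra.
From mathcomp Require Import reals trigo.
From mathcomp.real_closed Require Import complex.
From mathcomp Require Import ring.
Import Order.TTheory GRing.Theory Num.Theory.
Local Open Scope ring_scope.

(* The (q1 M + p1, q2 M + p2) entry of X is the inner product of psi_{p1,q1}
   and psi_{p2,q2}, i.e. (1/N) sum_n e^{j 2 pi ((p2 - p1) C_n / M + (q2 - q1) n / N)}.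
   Since C_n and n are integers, each summand is unchanged when p2 - p1 moves by
   a multiple of M or q2 - q1 by a multiple of N, so the entry depends only on
   (p2 - p1) mod M and (q2 - q1) mod N. *)

Lemma periodicz {U V : zmodType} (f : U -> V) (T : U) :
  periodic f T -> forall (z : int) a, f (a + T *~ z) = f a.
Proof.
move=> fT [] n a; first by rewrite -pmulrn periodicn.
by rewrite NegzE mulrNz -[in RHS](subrK (T *+ n.+1) a) -pmulrn periodicn.
Qed.

Section Expj.
Local Open Scope complex_scope.
Variable R : realType.

Lemma expj_periodz (x : R) (z : int) : expj (x + (pi *+ 2) *~ z) = expj x.
Proof. by rewrite /expj (periodicz _ _ (@cosD2pi R)) (periodicz _ _ (@sinD2pi R)). Qed.

Lemma conj_scaled_expjM (a x y : R) :
  (a%:C * expj x)^* * (a%:C * expj y) = (a * a)%:C * expj (y - x).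
Proof. by rewrite /expj cosB sinB /=; congr Complex; ring. Qed.

End Expj.

Lemma index_allpairs (T1 T2 : eqType) (s1 : seq T1) (s2 : seq T2) x1 x2 :
  x1 \in s1 -> x2 \in s2 ->
  index (x1, x2) [seq (y1, y2) | y1 <- s1, y2 <- s2] =
    (index x1 s1 * size s2 + index x2 s2)%N.
Proof.
move=> + x2s2; elim: s1 => //= y s IHs x1s1; rewrite index_cat.
have [<-|yx1] := eqVneq y x1.
  by rewrite map_f //= mul0n add0n index_map // => ? ? [].
rewrite ifN; last by apply/mapP => -[? _ [/eqP]]; rewrite eq_sym (negbTE yx1).
rewrite size_map IHs; first by rewrite mulSn addnA.
by move: x1s1; rewrite in_cons eq_sym (negbTE yx1).
Qed.

Lemma mxvec_indexE (m n : nat) (i : 'I_m) (j : 'I_n) :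
  val (mxvec_index i j) = (i * n + j)%N.
Proof.
rewrite /mxvec_index /= /enum_rank enum_rank_in.unlock /= insubdK; last first.
  by rewrite unfold_in /= cardE index_mem mem_enum.
rewrite enumT unlock /= /prod_enum index_allpairs ?mem_enum //.
by rewrite !index_enum_ord size_enum_ord.
Qed.

Lemma modn_addBz (a b m : nat) : (b <= m)%N ->
  (((a + m - b) %% m)%N = a%:Z - b%:Z %[mod m])%Z.
Proof.
move=> le_bm; rewrite -modz_nat modz_mod -subzn; last exact: leq_trans (leq_addl _ _).
by rewrite PoszD addrAC modzDr.
Qed.

Section GramEntries.
Local Open Scope complex_scope.
Variables (R : realType) (M N : nat) (Cseq : 'I_N -> 'I_M).

Definition psi_dot (p1 q1 p2 q2 : nat) : R[i] :=
  \sum_(n < N) (psi_entry R Cseq p1 q1 n)^* * psi_entry R Cseq p2 q2 n.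

Lemma mxblk_XmatE (q1 q2 : 'I_N) (p1 p2 : 'I_M) :
  mxblk (Xmat R Cseq) q1 q2 p1 p2 = psi_dot p1 q1 p2 q2.
Proof.
have M_gt0 : (0 < M)%N by apply: leq_ltn_trans (ltn_ord p1).
rewrite /mxblk /Xmat /psi_dot !mxE; apply: eq_bigr => n _.
rewrite !mxE !mxvec_indexE !modnMDl !modn_small // !divnMDl // !divn_small //.
by rewrite !addn0.
Qed.

Hypotheses (M_gt0 : (0 < M)%N) (N_gt0 : (0 < N)%N).

Lemma psi_dot_congr (p1 q1 p2 q2 p1' q1' p2' q2' : nat) :
  (p2%:Z - p1%:Z = p2'%:Z - p1'%:Z %[mod M])%Z ->
  (q2%:Z - q1%:Z = q2'%:Z - q1'%:Z %[mod N])%Z ->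
  psi_dot p1 q1 p2 q2 = psi_dot p1' q1' p2' q2'.
Proof.
move=> /eqP; rewrite eqz_mod_dvd => /dvdzP[k Ep].
move=> /eqP; rewrite eqz_mod_dvd => /dvdzP[l Eq].
apply: eq_bigr => n _; rewrite /psi_entry !conj_scaled_expjM; congr (_ * _).
rewrite -[RHS](@expj_periodz R _ (k * (Cseq n)%:Z + l * n%:Z)); congr expj.
have /(congr1 (fun z : int => z%:~R : R)) := Ep.
have /(congr1 (fun z : int => z%:~R : R)) := Eq.
rewrite !intrB !intrM -!pmulrn => EqR EpR.
have M0 : (M%:R : R) != 0 by rewrite pnatr_eq0 -lt0n.
have N0 : (N%:R : R) != 0 by rewrite pnatr_eq0 -lt0n.
have -> : p2%:R = p2'%:R - p1'%:R + k%:~R * M%:R + p1%:R :> R by rewrite -EpR; ring.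
have -> : q2%:R = q2'%:R - q1'%:R + l%:~R * N%:R + q1%:R :> R by rewrite -EqR; ring.
by field; apply/andP.
Qed.

End GramEntries.

Theorem lemma3 (R : realType) (M N : nat) (HM : (0 < M)%N) (HN : (0 < N)%N)
    (Cseq : 'I_N -> 'I_M) :
  forall q1 q2 : 'I_N,
    circulant (mxblk (Xmat R Cseq) q1 q2) /\
    (forall q0 d : 'I_N, val q0 = 0%N -> val d = ((q2 + N - q1) %% N)%N ->
       mxblk (Xmat R Cseq) q1 q2 = mxblk (Xmat R Cseq) q0 d).
Proof.
move=> q1 q2; split.
  move=> p1 p2 p0 j /= p0E jE; rewrite !mxblk_XmatE.
  apply: psi_dot_congr => //.
  by rewrite p0E jE subr0 modn_addBz // ltnW.
move=> q0 d /= q0E dE; apply/matrixP => p1 p2; rewrite !mxblk_XmatE.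
apply: psi_dot_congr => //.
by rewrite q0E dE subr0 modn_addBz // ltnW.
Qed.
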